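(* Let $\iota:\emptyset\to\{\bullet\}$ and let $e:\{a,b\}\to\{\bullet\}$ be the map from the two-point antidiscrete space to a point. Then, in $\mathrm{Top}$, $\{\iota\}^{lrrrrr}=\{e\}^r$, and this is the class of continuous maps $f:X\to Y$ such that each fibre $f^{-1}(y)$, $y\in Y$, with the subspace topology satisfies the separation axiom $T_0$.
   Context: For continuous maps $f:A\to B$, $g:C\to D$, $f\pitchfork g$ means: for all continuous $t:A\to C$, $b:B\to D$ with $g\circ t=b\circ f$ there is continuous $d:B\to C$ with $d\circ f=t$, $g\circ d=b$. For a class $P$, $P^l=\{f: f\pitchfork g\ \forall g\in P\}$, $P^r=\{g: f\pitchfork g\ \forall f\in P\}$; for a word $w$ in $l,r$, $P^w$ applies these operations from left to right (e.g. $P^{lrrrrr}=(\cdots((P^l)^r)\cdots)^r$ with five $r$'s). *)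

From HB Require Import structures.
From mathcomp Require Import all_boot all_order all_algebra.
From mathcomp Require Import all_classical all_reals all_analysis.
Unset Implicit Arguments. Unset Strict Implicit. Unset Printing Implicit Defensive.
Local Open Scope classical_set_scope.

(* A class of morphisms of Top: a predicate on maps between topological spaces.
   Membership in the classes built below always includes continuity. *)
Definition mclass := forall (A B : topologicalType), (A -> B) -> Prop.

Definition lifts {A B C D : topologicalType} (f : A -> B) (g : C -> D) : Prop :=
  forall (t : A -> C) (b : B -> D), continuous t -> continuous b ->
    g \o t = b \o f ->
    exists d : B -> C, [/\ continuous d, d \o f = t & g \o d = b].

Definition lorth (P : mclass) : mclass := fun A B f =>
  continuous f /\ forall (C D : topologicalType) (g : C -> D), P C D g -> lifts f g.
Definition rorth (P : mclass) : mclass := fun C D g =>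
  continuous g /\ forall (A B : topologicalType) (f : A -> B), P A B f -> lifts f g.

(* {i}^l and {i}^r for a single map i (literal unfoldings of lorth/rorth
   applied to the singleton class {i}). *)
Definition lorth1 {X Y : topologicalType} (i : X -> Y) : mclass := fun A B f =>
  continuous f /\ lifts f i.
Definition rorth1 {X Y : topologicalType} (i : X -> Y) : mclass := fun C D g =>
  continuous g /\ lifts i g.

Definition emptysp : topologicalType := discrete_topology void.
Definition pointsp : topologicalType := discrete_topology unit.

Inductive antidisc2 : Type := pt_a | pt_b.
Definition bool_of_ad (x : antidisc2) : bool := if x is pt_a then true else false.
Definition ad_of_bool (b : bool) : antidisc2 := if b then pt_a else pt_b.
Lemma bool_of_adK : cancel bool_of_ad ad_of_bool. Proof. by case. Qed.
HB.instance Definition _ := Choice.copy antidisc2 (can_type bool_of_adK).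

Definition antidisc_open : set_system antidisc2 :=
  fun A => A = set0 \/ A = setT.

Lemma antidisc_openT : antidisc_open setT.
Proof. by right. Qed.

Lemma antidisc_openI : setI_closed antidisc_open.
Proof.
move=> A B [->|->] [->|->]; rewrite ?set0I ?setI0 ?setIT ?setTI;
  by [left | right].
Qed.

Lemma antidisc_open_bigU (I : Type) (f : I -> set antidisc2) :
  (forall i, antidisc_open (f i)) -> antidisc_open (\bigcup_i f i).
Proof.
move=> Hf.
have [[i fi]|nT] := pselect (exists i, f i = setT).
- right; apply/seteqP; split=> // x _; exists i => //; by rewrite fi.
- left; apply/seteqP; split=> // x [i _ fxi].
  case: (Hf i) => fi; first by rewrite fi in fxi.
  by exfalso; apply: nT; exists i.
Qed.

HB.instance Definition _ := isOpenTopological.Build antidisc2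
  antidisc_openT antidisc_openI antidisc_open_bigU.

Definition iota_map : emptysp -> pointsp := fun _ => tt.
Definition e_map : antidisc2 -> pointsp := fun _ => tt.

Definition T0_fibres : mclass := fun X Y f =>
  continuous f /\ forall y : Y, kolmogorov_space (set_type (f @^-1` [set y])).

From HB Require Import structures.
From mathcomp Require Import all_boot all_order all_algebra.
From mathcomp Require Import all_classical all_reals all_analysis.
Local Open Scope classical_set_scope.

(** The classes are computed one orthogonal at a time. {ι}^l consists of the
    maps [A -> B] with [A] empty only if [B] is; testing against [2 -> 1] and
    [1 -> D] shows that its right class consists of the homeomorphisms and the
    maps out of the empty space. Lifting [∅ -> Y] against [h] produces a
    section of [h], so the next class is that of the maps with a continuous
    section; testing against [2 -> 1] yields the continuous injections; testing
    against [∅ -> F] and against the identity of [E] onto [E] with the topology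
    induced by [m] yields the surjections [m] whose domain carries the initial
    topology. A square with such an [m] on the left factors through [m] exactly
    when the right-hand map identifies topologically indistinguishable points
    of its fibres. Since [e] is itself an initial surjection, and lifting
    against it is precisely that identification, this last class is {e}^r; and
    a space is T0 iff indistinguishable points coincide. *)

Definition boolsp : topologicalType := discrete_topology bool.

Lemma comp_continuous {A B C : topologicalType} (f : A -> B) (g : B -> C) :
  continuous f -> continuous g -> continuous (g \o f).
Proof. by move=> fc gc x; apply: continuous_comp; [apply: fc | apply: gc]. Qed.

Lemma continuous_from_empty {A B : topologicalType} (f : A -> B) :
  ~ inhabited A -> continuous f.
Proof. by move=> nA x; case: nA. Qed.

Definition of_void {Z : topologicalType} (v : emptysp) : Z := match v with end.

Lemma of_void_continuous (Z : topologicalType) : continuous (@of_void Z).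
Proof. by case. Qed.

Lemma continuous_from_discrete {T : choiceType} {Z : topologicalType}
    (h : discrete_topology T -> Z) : continuous h.
Proof. by apply/continuousP => A _; apply: discrete_open. Qed.

Definition indist {T : topologicalType} (x y : T) : Prop :=
  forall U : set T, open U -> (U x <-> U y).

Lemma kolmogorov_indistP (T : topologicalType) :
  kolmogorov_space T <-> forall x y : T, indist x y -> x = y.
Proof.
split=> [T0 x y xy | indist_eq x y /eqP neq_xy].
  apply: contrapT => /eqP /T0 [A].
  by case=> -[/set_mem + /set_mem nA]; rewrite nbhsE => -[U [oU Uz] UA];
    apply/nA/UA/(xy U oU).
apply: contrapT => nsep; apply/neq_xy/indist_eq => U oU.
split=> HU; apply: contrapT => nU; apply: nsep; exists U.
  by left; split; apply: mem_set => //; apply: open_nbhs_nbhs.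
by right; split; apply: mem_set => //; apply: open_nbhs_nbhs.
Qed.

Lemma indist_subspace (X : topologicalType) (A : set X) (p q : set_type A) :
  indist p q <-> indist (val p) (val q).
Proof.
split=> [pq U oU | pq _ [U oU <-]]; last exact: pq.
by apply: (pq (val @^-1` U)); exists U.
Qed.

Lemma antidisc2_pair_continuous {C : topologicalType} {x1 x2 : C} :
  indist x1 x2 -> continuous (fun p : antidisc2 => if p is pt_a then x1 else x2).
Proof.
move=> x12; apply/continuousP => U oU.
have [Ux1 | nUx1] := pselect (U x1).
  by right; apply/seteqP; split=> // -[] _ //=; apply/(x12 U oU).
by left; apply/seteqP; split=> // -[] //= /(x12 U oU).
Qed.

Lemma lifts_to_point_const {A C D : topologicalType} {f : A -> pointsp}
    {g : C -> D} {t : A -> C} :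
  lifts f g -> continuous t -> (forall x y, g (t x) = g (t y)) ->
  forall x y, t x = t y.
Proof.
move=> fg tc gt x y.
have [|d [_ df _]] := fg t (fun _ => g (t x)) tc (@cst_continuous pointsp D _).
  by apply: funext => z /=; apply: gt.
by rewrite -df /= (_ : f x = f y) //; case: (f x); case: (f y).
Qed.

Lemma lifts_pair_inj (C D : topologicalType) (g : C -> D) :
  lifts (fun _ : boolsp => tt : pointsp) g -> injective g.
Proof.
move=> fg x1 x2 gx12; pose t (b : boolsp) := if b then x1 else x2.
have := lifts_to_point_const fg (continuous_from_discrete t) _ true false.
by apply=> -[] [].
Qed.

Lemma lifts_e_indist (C D : topologicalType) (g : C -> D) :
  lifts e_map g -> forall x1 x2, g x1 = g x2 -> indist x1 x2 -> x1 = x2.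
Proof.
move=> eg x1 x2 gx12 x12.
have := lifts_to_point_const eg (antidisc2_pair_continuous x12) _ pt_a pt_b.
by apply=> -[] [].
Qed.

Lemma lifts_from_empty_cod {A B C D : topologicalType} (f : A -> B) (g : C -> D) :
  ~ inhabited B -> lifts f g.
Proof.
move=> nB t b _ _ _; have nf (x : A) : False := nB (inhabits (f x)).
exists (fun y => False_rect _ (nB (inhabits y))); split.
- exact: continuous_from_empty.
- by apply: funext => x; case: (nf x).
- by apply: funext => y; case: nB; exists.
Qed.

Definition has_cont_inverse {C D : topologicalType} (g : C -> D) : Prop :=
  exists r : D -> C, [/\ continuous r, cancel g r & cancel r g].

Lemma lifts_cont_inverse_l {A B C D : topologicalType} (f : A -> B) (g : C -> D) :
  has_cont_inverse f -> lifts f g.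
Proof.
move=> [r [rc fr rf]] t b tc _ gt_bf; exists (t \o r); split.
- exact: comp_continuous.
- by apply: funext => x /=; rewrite fr.
- by apply: funext => y /=; rewrite -[g (t _)]/((g \o t) _) gt_bf /= rf.
Qed.

Lemma lifts_cont_inverse_r {A B C D : topologicalType} (f : A -> B) (g : C -> D) :
  has_cont_inverse g -> lifts f g.
Proof.
move=> [r [rc gr rg]] t b _ bc gt_bf; exists (r \o b); split.
- exact: comp_continuous.
- by apply: funext => x /=; rewrite -[b (f x)]/((b \o f) x) -gt_bf /= gr.
- by apply: funext => y /=; rewrite rg.
Qed.

Lemma rorth_ext {P Q R : mclass} :
  (forall A B f, P A B f <-> Q A B f) ->
  (forall C D g, rorth Q C D g <-> R C D g) ->
  forall C D g, rorth P C D g <-> R C D g.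
Proof.
move=> PQ QR C D g; rewrite -QR.
by split=> -[gc lg]; split=> // A B f /PQ; apply: lg.
Qed.

Definition reflects_empty : mclass := fun A B f =>
  continuous f /\ (inhabited B -> inhabited A).

Definition homeo_or_from_empty : mclass := fun C D g =>
  continuous g /\ (~ inhabited C \/ has_cont_inverse g).

Definition split_epi : mclass := fun X Y h =>
  continuous h /\ exists s : Y -> X, continuous s /\ cancel s h.

Definition cont_injection : mclass := fun C D k =>
  continuous k /\ injective k.

Definition initial_surjection : mclass := fun E F m =>
  [/\ continuous m, forall y, exists x, m x = y
    & forall U : set E, open U -> exists2 V : set F, open V & U = m @^-1` V].

Definition fibrewise_T0 : mclass := fun C D g =>
  continuous g /\ forall x y, g x = g y -> indist x y -> x = y.

Lemma lorth1_iota (A B : topologicalType) (f : A -> B) :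
  lorth1 iota_map A B f <-> reflects_empty A B f.
Proof.
split=> -[fc lf]; split=> //.
  move=> [y]; apply: contrapT => nA.
  pose t (x : A) : emptysp := False_rect _ (nA (inhabits x)).
  have [|d _] := lf t (fun _ => tt) (continuous_from_empty t nA)
                    (@cst_continuous B pointsp tt).
    by apply: funext => x; case: (t x).
  by case: (d y).
have [/lf [x] | nB] := pselect (inhabited B); last exact: lifts_from_empty_cod.
by move=> t; case: (t x).
Qed.

Lemma rorth_reflects_empty (C D : topologicalType) (g : C -> D) :
  rorth reflects_empty C D g <-> homeo_or_from_empty C D g.
Proof.
split=> -[gc lg]; split=> //.
  have [[c0] | ] := pselect (inhabited C); [right | by left].
  have ginj : injective g.
    apply/lifts_pair_inj/lg; split=> [|_]; last exact: inhabits true.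
    exact: (@cst_continuous boolsp pointsp tt).
  have pt_gc0 : reflects_empty pointsp D (fun _ => g c0).
    by split=> [|_]; [exact: cst_continuous | exact: inhabits tt].
  have [r [rc _ gr]] := lg _ _ _ pt_gc0 (fun _ => c0) id
      (@cst_continuous pointsp C c0) (fun _ => cvg_id) erefl.
  exists r; split=> // [x | y]; last exact: (congr1 (@^~ y) gr).
  by apply: ginj; exact: (congr1 (@^~ (g x)) gr).
move=> A B f [_ rf]; case: lg => [nC | ]; last exact: lifts_cont_inverse_r.
move=> t; apply: lifts_from_empty_cod => /rf [x].
by apply: nC; exists; exact: t x.
Qed.

Lemma rorth_homeo_or_from_empty (X Y : topologicalType) (h : X -> Y) :
  rorth homeo_or_from_empty X Y h <-> split_epi X Y h.
Proof.
split=> -[hc lh]; split=> //.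
  have void_Y : homeo_or_from_empty emptysp Y of_void.
    by split; [exact: of_void_continuous | left; case].
  have [|s [sc _ hs]] := lh _ _ _ void_Y of_void id
      (of_void_continuous X) (fun _ => cvg_id).
    by apply: funext => -[].
  by exists s; split=> // y; exact: (congr1 (@^~ y) hs).
move=> C D g [_ [nC | ]]; last exact: lifts_cont_inverse_l.
case: lh => s [sc hs] t b _ bc _; exists (s \o b); split.
- exact: comp_continuous.
- by apply: funext => x; case: nC; exists.
- by apply: funext => y /=; rewrite hs.
Qed.

Lemma rorth_split_epi (C D : topologicalType) (k : C -> D) :
  rorth split_epi C D k <-> cont_injection C D k.
Proof.
split=> -[kc lk]; split=> //.
  apply/lifts_pair_inj/lk; split; first exact: (@cst_continuous boolsp pointsp tt).
  exists (fun _ => true); split; first exact: continuous_from_discrete.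
  by case.
move=> X Y h [_ [s [sc hs]]] t b tc _ kt_bh.
have kt x : k (t x) = b (h x) by exact: (congr1 (@^~ x) kt_bh).
exists (t \o s); split.
- exact: comp_continuous.
- by apply: funext => x /=; apply: lk; rewrite !kt hs.
- by apply: funext => y /=; rewrite kt hs.
Qed.

Lemma rorth_cont_injection (E F : topologicalType) (m : E -> F) :
  rorth cont_injection E F m <-> initial_surjection E F m.
Proof.
split=> [[mc lm] | [mc msurj minit]].
  split=> //.
    have void_F : cont_injection emptysp F of_void.
      by split; [exact: of_void_continuous | case].
    have [|s [_ _ ms]] := lm _ _ _ void_F of_void id
        (of_void_continuous E) (fun _ => cvg_id).
      by apply: funext => -[].
    by move=> y; exists (s y); exact: (congr1 (@^~ y) ms).
  pose W := initial_topology m.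
  have idc : continuous (id : E -> W).
    by apply/continuousP => _ [V oV <-]; move/continuousP: mc; apply.
  have [d [dc dE _]] := lm _ _ _ (conj idc (@inj_id E)) id (m : W -> F)
      (fun _ => cvg_id) (@initial_continuous E F m) erefl.
  move: dc; rewrite (dE : d = id) => /continuousP idWE U /idWE [V oV VU].
  by exists V => //; rewrite VU.
split=> // A B i [_ iinj] t b _ bc mt_bi.
have lift y : exists e, m e = b y /\ forall x, i x = y -> t x = e.
  have [[x0 <-] | nx] := pselect (exists x, i x = y).
    exists (t x0); split; first exact: (congr1 (@^~ x0) mt_bi).
    by move=> x /iinj ->.
  have [e me] := msurj (b y); exists e; split=> // x ix.
  by case: nx; exists x.
have [d dP] := choice lift; exists d; split.
- apply/continuousP => _ /minit [V oV ->].
  rewrite (_ : d @^-1` (m @^-1` V) = b @^-1` V); first by move/continuousP: bc; apply.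
  by apply/seteqP; split=> y /=; rewrite (dP y).1.
- by apply: funext => x /=; rewrite ((dP (i x)).2 x).
- by apply: funext => y /=; rewrite (dP y).1.
Qed.

Section InitialSurjection.
Context {E F C : topologicalType} {m : E -> F} {t : E -> C}.
Hypotheses (m_init : initial_surjection E F m) (tc : continuous t).

Lemma initial_surjection_preimage (U : set C) :
  open U -> exists2 V : set F, open V & t @^-1` U = m @^-1` V.
Proof. by case: m_init => _ _ minit; move/continuousP: tc => tU /tU/minit. Qed.

Lemma initial_surjection_indist {x x'} : m x = m x' -> indist (t x) (t x').
Proof.
move=> mx U /initial_surjection_preimage [V _ tUmV].
by rewrite -[U (t x)]/((t @^-1` U) x) -[U (t x')]/((t @^-1` U) x') tUmV /= mx.
Qed.

Lemma continuous_comp_section {s : F -> E} : cancel s m -> continuous (t \o s).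
Proof.
move=> sK; apply/continuousP => U /initial_surjection_preimage [V oV tUmV].
by rewrite comp_preimage tUmV -comp_preimage (_ : m \o s = id) //; apply: funext.
Qed.

End InitialSurjection.

Lemma e_initial_surjection : initial_surjection antidisc2 pointsp e_map.
Proof.
split; first exact: (@cst_continuous antidisc2 pointsp tt).
  by case; exists pt_a.
by move=> U [->|->]; [exists set0 => //; exact: open0
                     | exists setT => //; exact: openT].
Qed.

Lemma rorth_initial_surjection (C D : topologicalType) (g : C -> D) :
  rorth initial_surjection C D g <-> fibrewise_T0 C D g.
Proof.
split=> -[gc lg]; split=> //.
  exact/lifts_e_indist/lg/e_initial_surjection.
move=> E F m m_init t b tc _ gt_bm.
have gt x : g (t x) = b (m x) by exact: (congr1 (@^~ x) gt_bm).
have [s sK] : exists s : F -> E, cancel s m.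
  by case: m_init => _ /choice [s sK] _; exists s.
exists (t \o s); split.
- exact: (continuous_comp_section m_init tc sK).
- apply: funext => x /=; apply: lg; first by rewrite !gt sK.
  by apply: (initial_surjection_indist m_init tc); rewrite sK.
- by apply: funext => y /=; rewrite gt sK.
Qed.

Lemma rorth1_e_map (C D : topologicalType) (g : C -> D) :
  rorth1 e_map C D g <-> fibrewise_T0 C D g.
Proof.
split=> [[gc lg] | /rorth_initial_surjection [gc lg]]; split=> //.
  exact: lifts_e_indist.
exact/lg/e_initial_surjection.
Qed.

Lemma fibrewise_T0_iff (C D : topologicalType) (g : C -> D) :
  fibrewise_T0 C D g <-> T0_fibres C D g.
Proof.
split=> -[gc T0g]; split=> //.
  move=> y; apply/kolmogorov_indistP => p q /indist_subspace pq; apply: val_inj.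
  by apply: T0g pq; rewrite (set_mem (valP p)) (set_mem (valP q)).
move=> x1 x2 gx12 x12; pose F := g @^-1` [set g x1].
have x1F : x1 \in F by apply/mem_set.
have x2F : x2 \in F by apply/mem_set.
suff /(congr1 val) : exist _ x1 x1F = exist _ x2 x2F :> set_type F by [].
by apply/(kolmogorov_indistP _).1; [exact: T0g | exact/indist_subspace].
Qed.

Theorem mainTheorem20 :
  (forall (X Y : topologicalType) (f : X -> Y),
     rorth (rorth (rorth (rorth (rorth (lorth1 iota_map))))) X Y f
     <-> rorth1 e_map X Y f) /\
  (forall (X Y : topologicalType) (f : X -> Y),
     rorth1 e_map X Y f <-> T0_fibres X Y f).
Proof.
have P1 := rorth_ext lorth1_iota rorth_reflects_empty.
have P2 := rorth_ext P1 rorth_homeo_or_from_empty.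
have P3 := rorth_ext P2 rorth_split_epi.
have P4 := rorth_ext P3 rorth_cont_injection.
have P5 := rorth_ext P4 rorth_initial_surjection.
by split=> X Y f; rewrite ?P5 rorth1_e_map ?fibrewise_T0_iff.
Qed.
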